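(* For the unique formal series solution $(f^{0,+},g^{0,+})$ of $q$-$P(A_1)$ with $F^{0,+}_{1,1}=1$, $G^{0,+}_{1,1}=\Lambda$, the coefficients of $t^1$ are $$F_1^{0,+}(\phi)=\sum_{i\le1}F^{0,+}_{1,i}\phi^i=\phi+F_{\rm eq}+\mu\phi^{-1},\qquad G_1^{0,+}(\phi)=\sum_{i\le1}G^{0,+}_{1,i}\phi^i=\Lambda\phi+G_{\rm eq}+\frac{b_1b_2b_3b_4}{\Lambda}\mu\phi^{-1},$$ i.e. $F^{0,+}_{1,i}=G^{0,+}_{1,i}=0$ for $i\le-2$.
   Context: Parameters $\mathbf b=(b_1,\dots,b_8)\in(\mathbb C^* )^8$, $q=\frac{b_1b_2b_3b_4}{b_5b_6b_7b_8}$, $B=b_1b_2b_3b_4$. The equation $q$-$P(A_1)$ for $f=f(t)$, $g=g(t)$ is $$(gf-t^2)(g\bar f-qt^2)(g-b_5)(g-b_6)(g-b_7)(g-b_8)=(gf-1)(g\bar f-1)(g-b_1t)(g-b_2t)(g-b_3t)(g-b_4t),$$ $$(g\bar f-qt^2)(\bar g\bar f-q^2t^2)(\bar f-b_5^{-1})(\bar f-b_6^{-1})(\bar f-b_7^{-1})(\bar f-b_8^{-1})=(g\bar f-1)(\bar g\bar f-1)(\bar f-b_1^{-1}qt)(\bar f-b_2^{-1}qt)(\bar f-b_3^{-1}qt)(\bar f-b_4^{-1}qt).$$ Formal setting: $\Lambda,\phi$ are indeterminates, $\lambda=\Lambda^2/B$; formal solutions are pairs $f=\sum_{n\ge1}\sum_{i\le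 n}F_{n,i}\phi^it^n$, $g=\sum_{n\ge1}\sum_{i\le n}G_{n,i}\phi^it^n$ (coefficients depending on $(\Lambda,\mathbf b)$) satisfying both equations identically, where the shift is $t\mapsto qt$, $\phi\mapsto\lambda\phi$, $\Lambda\mapsto\Lambda$. There is a unique such solution with $F_{1,1}=1$, $G_{1,1}=\Lambda$, denoted $(f^{0,+},g^{0,+})$ with coefficients $F^{0,+}_{n,i},G^{0,+}_{n,i}$. $S_i^{\pm}$ is the $i$-th elementary symmetric polynomial in $b_1^{\pm1},\dots,b_4^{\pm1}$, and $F_{\rm eq}=-\frac{B\Lambda(S_1^++2S_1^-\Lambda+S_3^-\Lambda^2)}{(B-\Lambda^2)^2}$, $G_{\rm eq}=-\frac{B\Lambda(S_3^++2S_1^+\Lambda+S_1^-\Lambda^2)}{(B-\Lambda^2)^2}$, $\mu=\frac{\Lambda\prod_{1\le a<c\le4}(\Lambda+b_ab_c)}{(B-\Lambda^2)^4}$. *)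

From HB Require Import structures.
From mathcomp Require Import all_boot all_order all_algebra fraction.
Set Implicit Arguments. Unset Strict Implicit. Unset Printing Implicit Defensive.
Import Order.TTheory GRing.Theory Num.Theory.
Local Open Scope ring_scope.

(* Coefficient field: rational functions Q(b1,...,b8,Lambda) in 9 indeterminates,
   built as the fraction field of the 9-fold iterated polynomial ring over rat. *)
Definition P1 : idomainType := {poly rat}.
Definition P2 : idomainType := {poly P1}.
Definition P3 : idomainType := {poly P2}.
Definition P4 : idomainType := {poly P3}.
Definition P5 : idomainType := {poly P4}.
Definition P6 : idomainType := {poly P5}.
Definition P7 : idomainType := {poly P6}.
Definition P8 : idomainType := {poly P7}.
Definition P9 : idomainType := {poly P8}.
Definition K : fieldType := {fraction P9}.
Definition tofracK (x : P9) : K := @FracField.tofrac P9 x.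

Definition u2 (x : P1) : P2 := x%:P.
Definition u3 (x : P2) : P3 := x%:P.
Definition u4 (x : P3) : P4 := x%:P.
Definition u5 (x : P4) : P5 := x%:P.
Definition u6 (x : P5) : P6 := x%:P.
Definition u7 (x : P6) : P7 := x%:P.
Definition u8 (x : P7) : P8 := x%:P.
Definition u9 (x : P8) : P9 := x%:P.

Definition X1 : P9 := u9 (u8 (u7 (u6 (u5 (u4 (u3 (u2 ('X : {poly rat})))))))).
Definition X2 : P9 := u9 (u8 (u7 (u6 (u5 (u4 (u3 ('X : {poly P1}))))))).
Definition X3 : P9 := u9 (u8 (u7 (u6 (u5 (u4 ('X : {poly P2})))))).
Definition X4 : P9 := u9 (u8 (u7 (u6 (u5 ('X : {poly P3}))))).
Definition X5 : P9 := u9 (u8 (u7 (u6 ('X : {poly P4})))).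
Definition X6 : P9 := u9 (u8 (u7 ('X : {poly P5}))).
Definition X7 : P9 := u9 (u8 ('X : {poly P6})).
Definition X8 : P9 := u9 ('X : {poly P7}).
Definition X9 : P9 := ('X : {poly P8}).

Definition b1 : K := tofracK X1.
Definition b2 : K := tofracK X2.
Definition b3 : K := tofracK X3.
Definition b4 : K := tofracK X4.
Definition b5 : K := tofracK X5.
Definition b6 : K := tofracK X6.
Definition b7 : K := tofracK X7.
Definition b8 : K := tofracK X8.
Definition Lam : K := tofracK X9.

Definition BB : K := b1 * b2 * b3 * b4.
Definition qq : K := BB / (b5 * b6 * b7 * b8).
Definition lam : K := Lam ^+ 2 / BB.

(* Formal double series  sum_{n >= 0} sum_{i in Z} a n i * phi^i * t^n,
   represented by coefficient arrays. Only arrays with a n i = 0 for i > n are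
   considered ("i <= n"); the product below is the Cauchy product for such arrays
   (all inner sums are then finite). *)
Definition ser := nat -> int -> K.

Definition sadd (a b : ser) : ser := fun n i => a n i + b n i.
Definition ssub (a b : ser) : ser := fun n i => a n i - b n i.

(* (a*b)_{n,i} = sum_{m=0}^{n} sum_{i1 = i-n+m}^{m} a_{m,i1} b_{n-m,i-i1},
   with i1 = m - j, 0 <= j <= n - i ; zero if i > n. *)
Definition smul (a b : ser) : ser := fun n i =>
  if i <= n%:Z then
    \sum_(m < n.+1) \sum_(j < (absz (n%:Z - i)).+1)
       a m (m%:Z - j%:Z) * b (n - m)%N (i - m%:Z + j%:Z)
  else 0.

Definition tmon (k : nat) (c : K) : ser := fun n i =>
  if (n == k) && (i == 0) then c else 0.

Definition sprod (s : seq ser) : ser := foldr smul (tmon 0 1) s.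

(* the shift t -> q t, phi -> lambda phi (Lambda, b fixed) *)
Definition shift (a : ser) : ser := fun n i => qq ^+ n * lam ^ i * a n i.

Definition supported (a : ser) : Prop :=
  forall n i, ((n == 0)%N || (n%:Z < i)) -> a n i = 0.

Definition qPA1_eq1 (f g : ser) : Prop :=
  let fb := shift f in
  sprod [:: ssub (smul g f) (tmon 2 1); ssub (smul g fb) (tmon 2 qq);
            ssub g (tmon 0 b5); ssub g (tmon 0 b6); ssub g (tmon 0 b7); ssub g (tmon 0 b8)]
  = sprod [:: ssub (smul g f) (tmon 0 1); ssub (smul g fb) (tmon 0 1);
            ssub g (tmon 1 b1); ssub g (tmon 1 b2); ssub g (tmon 1 b3); ssub g (tmon 1 b4)].

Definition qPA1_eq2 (f g : ser) : Prop :=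
  let fb := shift f in
  let gb := shift g in
  sprod [:: ssub (smul g fb) (tmon 2 qq); ssub (smul gb fb) (tmon 2 (qq ^+ 2));
            ssub fb (tmon 0 b5^-1); ssub fb (tmon 0 b6^-1);
            ssub fb (tmon 0 b7^-1); ssub fb (tmon 0 b8^-1)]
  = sprod [:: ssub (smul g fb) (tmon 0 1); ssub (smul gb fb) (tmon 0 1);
            ssub fb (tmon 1 (b1^-1 * qq)); ssub fb (tmon 1 (b2^-1 * qq));
            ssub fb (tmon 1 (b3^-1 * qq)); ssub fb (tmon 1 (b4^-1 * qq))].

Definition formal_solution (f g : ser) : Prop :=
  supported f /\ supported g /\ qPA1_eq1 f g /\ qPA1_eq2 f g.

Definition S1p : K := b1 + b2 + b3 + b4.
Definition S3p : K := b1*b2*b3 + b1*b2*b4 + b1*b3*b4 + b2*b3*b4.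
Definition S1m : K := b1^-1 + b2^-1 + b3^-1 + b4^-1.
Definition S3m : K := b1^-1*b2^-1*b3^-1 + b1^-1*b2^-1*b4^-1
                    + b1^-1*b3^-1*b4^-1 + b2^-1*b3^-1*b4^-1.

Definition Feq : K :=
  - (BB * Lam * (S1p + 2 * S1m * Lam + S3m * Lam ^+ 2)) / (BB - Lam ^+ 2) ^+ 2.
Definition Geq : K :=
  - (BB * Lam * (S3p + 2 * S1p * Lam + S1m * Lam ^+ 2)) / (BB - Lam ^+ 2) ^+ 2.
Definition mu : K :=
  Lam * ((Lam + b1*b2) * (Lam + b1*b3) * (Lam + b1*b4) * (Lam + b2*b3)
         * (Lam + b2*b4) * (Lam + b3*b4)) / (BB - Lam ^+ 2) ^+ 4.

From HB Require Import structures.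
From mathcomp Require Import all_boot all_order all_algebra fraction.
From mathcomp Require Import ring zify.
From Stdlib Require Import FunctionalExtensionality.
Set Implicit Arguments. Unset Strict Implicit. Unset Printing Implicit Defensive.
Import GRing.Theory.
Local Open Scope ring_scope.

(* Let F_m, G_m be the coefficients of phi^(1-m) t in f and g.  As f and g start
   at t^1, the t^4 coefficients of the two equations of q-P(A1) only involve F and G;
   up to constant factors they are the sequences [defect1 F G] and [defect2 F G]
   below, which must vanish.  Their m-th terms are linear in (F_m, G_m) modulo
   F_0..F_(m-1), G_0..G_(m-1), with determinant a nonzero multiple of
   (lam^-m - 1)^2; as lam = Lam^2/B is not a root of unity, F and G are determined by
   F_0 = 1 and G_0 = Lam.  The sequences (1, F_eq, mu, 0, 0, ...) and
   (Lam, G_eq, B mu / Lam, 0, 0, ...) satisfy the recurrences (a rational identity for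
   each m <= 8, trivially beyond), so they are F and G. *)

Section CauchyProduct.
Variable R : comPzRingType.
Implicit Types (U V W : nat -> R) (a b c : R).

Definition conv U V : nat -> R := fun m => \sum_(0 <= j < m.+1) U j * V (m - j)%N.

Definition mono (k : nat) c : nat -> R := fun m => if m == k then c else 0.

Definition convs (Us : seq (nat -> R)) : nat -> R := foldr conv (mono 0 1) Us.

Definition bounded (n : nat) U := forall j, (n < j)%N -> U j = 0.

Definition agree_below (m : nat) U V := forall j, (j < m)%N -> U j = V j.

Lemma conv_at0 U V : conv U V 0 = U 0%N * V 0%N.
Proof. by rewrite /conv big_nat1. Qed.

Lemma conv_mono0l c U : conv (mono 0 c) U = c \*o U.
Proof.
apply: functional_extensionality => m.
rewrite /conv big_nat_recl // big1_seq ?addr0 ?subn0 // => j _.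
by rewrite mul0r.
Qed.

Lemma conv_mono0r c U : conv U (mono 0 c) = c \*o U.
Proof.
apply: functional_extensionality => m.
rewrite /conv big_nat_recr //= subnn big1_seq ?add0r 1?mulrC // => j.
by rewrite mem_index_iota /= => hj; rewrite /mono subn_eq0 leqNgt hj mulr0.
Qed.

Lemma convZl c U V : conv (c \*o U) V = c \*o conv U V.
Proof.
apply: functional_extensionality => m.
by rewrite /conv /= mulr_sumr; apply: eq_bigr => j _; rewrite mulrA.
Qed.

Lemma convZr c U V : conv U (c \*o V) = c \*o conv U V.
Proof.
apply: functional_extensionality => m.
by rewrite /conv /= mulr_sumr; apply: eq_bigr => j _; rewrite mulrCA.
Qed.

Lemma mono_mull k c : mono k c = c \*o mono k 1.
Proof. by apply: functional_extensionality => m; rewrite /mono /=; case: eqP; rewrite ?mulr1 ?mulr0. Qed.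

Lemma mono_mul k a c : mono k (a * c) = a \*o mono k c.
Proof. by apply: functional_extensionality => m; rewrite /mono /=; case: eqP; rewrite ?mulr0. Qed.

Lemma sub0_mono k c : \0 \- mono k c = mono k (- c).
Proof. by apply: functional_extensionality => m; rewrite /mono /=; case: eqP; rewrite sub0r ?oppr0. Qed.

Lemma mull_mull a c U : a \*o (c \*o U) = (a * c) \*o U.
Proof. by apply: functional_extensionality => m /=; rewrite mulrA. Qed.

Lemma mull_subr c U V : c \*o U \- c \*o V = c \*o (U \- V).
Proof. by apply: functional_extensionality => m /=; rewrite mulrBr. Qed.

Lemma bounded_conv n p U V : bounded n U -> bounded p V -> bounded (n + p) (conv U V).
Proof.
move=> hU hV m hm; rewrite /conv big1_seq // => j _.
case: (leqP j n) => hj; first by rewrite hV ?mulr0 //; lia.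
by rewrite hU ?mul0r.
Qed.

Lemma bounded_sub n U V : bounded n U -> bounded n V -> bounded n (U \- V).
Proof. by move=> hU hV j hj /=; rewrite hU ?hV ?subr0. Qed.

Lemma bounded_mul n U W : bounded n U -> bounded n (W \* U).
Proof. by move=> hU j hj /=; rewrite hU ?mulr0. Qed.

Lemma bounded_mull n c U : bounded n U -> bounded n (c \*o U).
Proof. by move=> hU j hj /=; rewrite hU ?mulr0. Qed.

Lemma bounded_mono n k c : (k <= n)%N -> bounded n (mono k c).
Proof. by move=> hk j hj; rewrite /mono; case: eqP => // hjk; lia. Qed.

Definition differ_at (m : nat) U V a := agree_below m U V /\ U m - V m = a.

Lemma differ_conv m U U' V V' a b : (0 < m)%N ->
  differ_at m U U' a -> differ_at m V V' b ->
  differ_at m (conv U V) (conv U' V') (U 0%N * b + a * V 0%N).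
Proof.
case: m => // m _ [hU <-] [hV <-]; split=> [j hj|].
  by apply: eq_big_nat => i /andP[_ hi]; rewrite hU ?hV //; lia.
rewrite /conv !(big_nat_recr m.+1) // !(big_nat_recl m) //= !subn0 !subnn.
rewrite (eq_big_nat _ _ (F1 := fun i => U i.+1 * V (m.+1 - i.+1)%N)
                        (F2 := fun i => U' i.+1 * V' (m.+1 - i.+1)%N)) => [|i /andP[_ hi]].
  by rewrite (hU 0%N) // (hV 0%N) //; ring.
by rewrite hU ?hV //; lia.
Qed.

Lemma differ_refl m U : differ_at m U U 0.
Proof. by split=> //; rewrite subrr. Qed.

Lemma differ_sub m U U' V V' a b :
  differ_at m U U' a -> differ_at m V V' b -> differ_at m (U \- V) (U' \- V') (a - b).
Proof. by case=> hU <- [hV <-]; split=> [j hj|] /=; [rewrite hU ?hV | ring]. Qed.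

Lemma differ_mul m U U' W a : differ_at m U U' a -> differ_at m (W \* U) (W \* U') (W m * a).
Proof. by case=> hU <-; split=> [j hj|] /=; [rewrite hU | ring]. Qed.

Lemma differ_mull m U U' c a : differ_at m U U' a -> differ_at m (c \*o U) (c \*o U') (c * a).
Proof. by case=> hU <-; split=> [j hj|] /=; [rewrite hU | ring]. Qed.

End CauchyProduct.

Lemma mull_cancel (R : fieldType) (a c : R) (U V : nat -> R) :
  a \*o U = c \*o V -> a != 0 -> U = (c / a) \*o V.
Proof.
move=> e a_neq0; apply: functional_extensionality => m.
have /= e' := congr1 (fun W => W m) e.
by rewrite /= mulrAC -e' mulrC mulKf.
Qed.

Lemma cramer2_eq0 (R : idomainType) (a b c d x y : R) :
  a * x + b * y = 0 -> c * x + d * y = 0 -> a * d - b * c != 0 -> x = 0 /\ y = 0.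
Proof.
move=> e1 e2 det.
have ex : (a * d - b * c) * x = d * (a * x + b * y) - b * (c * x + d * y) by ring.
have ey : (a * d - b * c) * y = a * (c * x + d * y) - c * (a * x + b * y) by ring.
rewrite e1 e2 !mulr0 subr0 in ex ey.
by move/eqP: ex; move/eqP: ey; rewrite !mulf_eq0 (negbTE det) /= => /eqP-> /eqP->.
Qed.

Section Recurrence.
Variables (R : fieldType) (b1 b2 b3 b4 b5 b6 b7 b8 L : R).
Implicit Types (F G : nat -> R).

Let B := b1 * b2 * b3 * b4.
Let q := B / (b5 * b6 * b7 * b8).
Let lam := L ^+ 2 / B.

(* For the t^1 coefficients F, G of f, g (F m is the coefficient of phi^(1-m) t),
   the t^1 coefficient of fbar is q [twist F], and the fac_* are the lowest
   t-coefficients of g f - t^2, (g fbar - q t^2)/q, (gbar fbar - q^2 t^2)/q^2, g - b t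
   and (fbar - b^-1 q t)/q.  [defect1] is the t^4 coefficient of LHS - RHS of the
   first equation, [defect2] that of the second divided by q^3 / (b5 b6 b7 b8). *)
Definition twist F := (fun m => lam * lam^-1 ^+ m) \* F.

Definition fac_gf F G := conv G F \- mono 2 1.
Definition fac_gfb F G := conv G (twist F) \- mono 2 1.
Definition fac_gbfb F G := conv (twist G) (twist F) \- mono 2 1.
Definition fac_g b G := G \- mono 1 b.
Definition fac_fb b F := twist F \- mono 1 b^-1.

Definition defect1 F G := B \*o conv (fac_gf F G) (fac_gfb F G)
  \- conv (fac_g b1 G) (conv (fac_g b2 G) (conv (fac_g b3 G) (fac_g b4 G))).
Definition defect2 F G := conv (fac_gfb F G) (fac_gbfb F G)
  \- B \*o conv (fac_fb b1 F) (conv (fac_fb b2 F) (conv (fac_fb b3 F) (fac_fb b4 F))).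

Definition F_eq : R :=
  - (B * L * (b1 + b2 + b3 + b4 + 2 * (b1^-1 + b2^-1 + b3^-1 + b4^-1) * L
      + (b1^-1 * b2^-1 * b3^-1 + b1^-1 * b2^-1 * b4^-1 + b1^-1 * b3^-1 * b4^-1
         + b2^-1 * b3^-1 * b4^-1) * L ^+ 2)) / (B - L ^+ 2) ^+ 2.
Definition G_eq : R :=
  - (B * L * (b1 * b2 * b3 + b1 * b2 * b4 + b1 * b3 * b4 + b2 * b3 * b4
      + 2 * (b1 + b2 + b3 + b4) * L + (b1^-1 + b2^-1 + b3^-1 + b4^-1) * L ^+ 2))
  / (B - L ^+ 2) ^+ 2.
Definition mu_sol : R :=
  L * ((L + b1 * b2) * (L + b1 * b3) * (L + b1 * b4) * (L + b2 * b3)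
       * (L + b2 * b4) * (L + b3 * b4)) / (B - L ^+ 2) ^+ 4.

Definition quad (a0 a1 a2 : R) (m : nat) : R :=
  match m with 0 => a0 | 1 => a1 | 2 => a2 | _ => 0 end.

Definition sol_F := quad 1 F_eq mu_sol.
Definition sol_G := quad L G_eq (B / L * mu_sol).

Hypotheses (b1_neq0 : b1 != 0) (b2_neq0 : b2 != 0) (b3_neq0 : b3 != 0) (b4_neq0 : b4 != 0)
  (L_neq0 : L != 0) (B_L2_neq0 : B - L ^+ 2 != 0).

Let B_neq0 : B != 0.
Proof. exact: mulf_neq0 (mulf_neq0 (mulf_neq0 b1_neq0 b2_neq0) b3_neq0) b4_neq0. Qed.

Let lam_neq0 : lam != 0.
Proof. exact: mulf_neq0 (expf_neq0 2 L_neq0) (invr_neq0 B_neq0). Qed.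

Lemma sol_defects_le8 m : (m <= 8)%N -> defect1 sol_F sol_G m = 0 /\ defect2 sol_F sol_G m = 0.
Proof.
do 9 (case: m => [_|m]; first by split;
  rewrite /defect1 /defect2 /fac_gf /fac_gfb /fac_gbfb /fac_g /fac_fb /twist /conv /mono
    /sol_F /sol_G unlock /= /F_eq /G_eq /mu_sol /lam /B; field;
  rewrite -/B ?B_L2_neq0 ?L_neq0 ?b1_neq0 ?b2_neq0 ?b3_neq0 ?b4_neq0).
by [].
Qed.

Lemma bounded_sol_F : bounded 2 sol_F. Proof. by case=> [|[|[|j]]]. Qed.
Lemma bounded_sol_G : bounded 2 sol_G. Proof. by case=> [|[|[|j]]]. Qed.

Lemma sol_defects_bounded : bounded 8 (defect1 sol_F sol_G) /\ bounded 8 (defect2 sol_F sol_G).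
Proof.
have bF := bounded_sol_F; have bG := bounded_sol_G.
have btF : bounded 2 (twist sol_F) := bounded_mul _ bF.
have btG : bounded 2 (twist sol_G) := bounded_mul _ bG.
have b_gf : bounded 4 (fac_gf sol_F sol_G).
  by apply: bounded_sub (bounded_conv bG bF) _; apply: bounded_mono.
have b_gfb : bounded 4 (fac_gfb sol_F sol_G).
  by apply: bounded_sub (bounded_conv bG btF) _; apply: bounded_mono.
have b_gbfb : bounded 4 (fac_gbfb sol_F sol_G).
  by apply: bounded_sub (bounded_conv btG btF) _; apply: bounded_mono.
have b_g b : bounded 2 (fac_g b sol_G) by apply: bounded_sub bG _; apply: bounded_mono.
have b_fb b : bounded 2 (fac_fb b sol_F) by apply: bounded_sub btF _; apply: bounded_mono.
split; apply: bounded_sub.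
- exact: bounded_mull (bounded_conv b_gf b_gfb).
- exact: bounded_conv (b_g b1) (bounded_conv (b_g b2) (bounded_conv (b_g b3) (b_g b4))).
- exact: bounded_conv b_gfb b_gbfb.
- exact: bounded_mull (bounded_conv (b_fb b1) (bounded_conv (b_fb b2) (bounded_conv (b_fb b3) (b_fb b4)))).
Qed.

Definition solution F G :=
  [/\ F 0%N = 1, G 0%N = L, forall m, defect1 F G m = 0 & forall m, defect2 F G m = 0].

Lemma solution_sol : solution sol_F sol_G.
Proof.
have [bd1 bd2] := sol_defects_bounded.
split=> // m; case: (leqP m 8) => [/sol_defects_le8[] e1 e2 // | m_gt8].
- exact: bd1.
- exact: bd2.
Qed.

Lemma defect1_differ m F G F' G' x y : (0 < m)%N -> F 0%N = 1 -> G 0%N = L ->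
  differ_at m F F' x -> differ_at m G G' y ->
  defect1 F G m - defect1 F' G' m = L ^+ 3 * (L * (lam^-1 ^+ m + 1) * x + (-2) * y).
Proof.
move=> m_gt0 F0 G0 dF dG.
have dtF := differ_mul (fun j => lam * lam^-1 ^+ j) dF.
have d_gf := differ_sub (differ_conv m_gt0 dG dF) (differ_refl m (mono 2 1)).
have d_gfb := differ_sub (differ_conv m_gt0 dG dtF) (differ_refl m (mono 2 1)).
have d_g b := differ_sub dG (differ_refl m (mono 1 b)).
have [_ ->] := differ_sub (differ_mull B (differ_conv m_gt0 d_gf d_gfb))
  (differ_conv m_gt0 (d_g b1) (differ_conv m_gt0 (d_g b2) (differ_conv m_gt0 (d_g b3) (d_g b4)))).
rewrite /= !conv_at0 /mono /= F0 G0 /lam /B; field.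
by rewrite ?b1_neq0 ?b2_neq0 ?b3_neq0 ?b4_neq0.
Qed.

Lemma defect2_differ m F G F' G' x y : (0 < m)%N -> F 0%N = 1 -> G 0%N = L ->
  differ_at m F F' x -> differ_at m G G' y ->
  defect2 F G m - defect2 F' G' m
  = lam ^+ 3 * L * ((-2) * L * lam^-1 ^+ m * x + (lam^-1 ^+ m + 1) * y).
Proof.
move=> m_gt0 F0 G0 dF dG.
have dtF := differ_mul (fun j => lam * lam^-1 ^+ j) dF.
have dtG := differ_mul (fun j => lam * lam^-1 ^+ j) dG.
have d_gfb := differ_sub (differ_conv m_gt0 dG dtF) (differ_refl m (mono 2 1)).
have d_gbfb := differ_sub (differ_conv m_gt0 dtG dtF) (differ_refl m (mono 2 1)).
have d_fb b := differ_sub dtF (differ_refl m (mono 1 b^-1)).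
have [_ ->] := differ_sub (differ_conv m_gt0 d_gfb d_gbfb) (differ_mull B
  (differ_conv m_gt0 (d_fb b1) (differ_conv m_gt0 (d_fb b2) (differ_conv m_gt0 (d_fb b3) (d_fb b4))))).
rewrite /= !conv_at0 /mono /= F0 G0 /lam /B; field.
by rewrite ?L_neq0 ?b1_neq0 ?b2_neq0 ?b3_neq0 ?b4_neq0.
Qed.

Hypotheses (b5_neq0 : b5 != 0) (b6_neq0 : b6 != 0) (b7_neq0 : b7 != 0) (b8_neq0 : b8 != 0).

Let q_neq0 : q != 0.
Proof.
exact: mulf_neq0 B_neq0 (invr_neq0 (mulf_neq0 (mulf_neq0 (mulf_neq0 b5_neq0 b6_neq0) b7_neq0) b8_neq0)).
Qed.

Lemma defect1_eq0 F G :
  convs [:: fac_gf F G; conv G (q \*o twist F) \- mono 2 q;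
            \0 \- mono 0 b5; \0 \- mono 0 b6; \0 \- mono 0 b7; \0 \- mono 0 b8]
  = convs [:: \0 \- mono 0 1; \0 \- mono 0 1;
              fac_g b1 G; fac_g b2 G; fac_g b3 G; fac_g b4 G] ->
  forall m, defect1 F G m = 0.
Proof.
rewrite /convs /= !sub0_mono convZr (mono_mull 2 q) mull_subr -/(fac_gfb F G).
rewrite !(conv_mono0l, conv_mono0r, convZl, convZr) !mull_mull => /mull_cancel E m.
rewrite /defect1 E /=; last first.
  by rewrite mulr1; do 4 (apply: mulf_neq0; last by rewrite oppr_eq0); exact: q_neq0.
rewrite /q /B; field.
by rewrite ?oppr_eq0 ?b1_neq0 ?b2_neq0 ?b3_neq0 ?b4_neq0 ?b5_neq0 ?b6_neq0 ?b7_neq0 ?b8_neq0.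
Qed.

Lemma defect2_eq0 F G :
  convs [:: conv G (q \*o twist F) \- mono 2 q;
            conv (q \*o twist G) (q \*o twist F) \- mono 2 (q ^+ 2);
            \0 \- mono 0 b5^-1; \0 \- mono 0 b6^-1; \0 \- mono 0 b7^-1; \0 \- mono 0 b8^-1]
  = convs [:: \0 \- mono 0 1; \0 \- mono 0 1;
              q \*o twist F \- mono 1 (b1^-1 * q); q \*o twist F \- mono 1 (b2^-1 * q);
              q \*o twist F \- mono 1 (b3^-1 * q); q \*o twist F \- mono 1 (b4^-1 * q)] ->
  forall m, defect2 F G m = 0.
Proof.
rewrite /convs /= !sub0_mono !convZl !convZr expr2 (mono_mul 2 q q) (mono_mull 2 q).
rewrite ![_^-1 * q]mulrC !(mono_mul 1 q) !mull_subr.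
rewrite -/(fac_gfb F G) -/(fac_gbfb F G) -!/(fac_fb _ F).
rewrite !(conv_mono0l, conv_mono0r, convZl, convZr) !mull_mull => /mull_cancel E m.
rewrite /defect2 E /=; last first.
  rewrite mulr1; do 4 (apply: mulf_neq0; last by rewrite oppr_eq0 invr_eq0).
  exact: mulf_neq0 (mulf_neq0 q_neq0 q_neq0) q_neq0.
rewrite /q /B; field.
by rewrite ?oppr_eq0 ?oner_eq0 ?b1_neq0 ?b2_neq0 ?b3_neq0 ?b4_neq0 ?b5_neq0 ?b6_neq0 ?b7_neq0 ?b8_neq0.
Qed.

Hypothesis lam_expn_neq1 : forall m, (0 < m)%N -> lam ^+ m != 1.

Lemma solution_step m F G F' G' : (0 < m)%N -> solution F G -> solution F' G' ->
  agree_below m F F' -> agree_below m G G' -> F m = F' m /\ G m = G' m.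
Proof.
move=> m_gt0 [F0 G0 eF1 eF2] [_ _ eF1' eF2'] aF aG.
have d1 := defect1_differ m_gt0 F0 G0 (conj aF erefl) (conj aG erefl).
have d2 := defect2_differ m_gt0 F0 G0 (conj aF erefl) (conj aG erefl).
rewrite eF1 eF1' subrr in d1; rewrite eF2 eF2' subrr in d2.
move: d1 d2; set s := lam^-1 ^+ m; set x := F m - F' m; set y := G m - G' m => d1 d2.
have e1 : L * (s + 1) * x + (-2) * y = 0.
  by apply: (mulfI (expf_neq0 3 L_neq0)); rewrite -d1 mulr0.
have e2 : (-2) * L * s * x + (s + 1) * y = 0.
  by apply: (mulfI (mulf_neq0 (expf_neq0 3 lam_neq0) L_neq0)); rewrite -d2 mulr0.
have det : L * (s + 1) * (s + 1) - (-2) * ((-2) * L * s) != 0.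
  have -> : L * (s + 1) * (s + 1) - (-2) * ((-2) * L * s) = L * (s - 1) ^+ 2 by ring.
  by rewrite mulf_neq0 ?expf_neq0 // subr_eq0 /s exprVn invr_eq1 lam_expn_neq1.
by have [/subr0_eq -> /subr0_eq ->] := cramer2_eq0 e1 e2 det.
Qed.

Lemma solution_unique F G F' G' : solution F G -> solution F' G' -> F =1 F' /\ G =1 G'.
Proof.
move=> sol sol'.
suff agree m : agree_below m F F' /\ agree_below m G G'.
  by split=> j; [apply: (agree j.+1).1 | apply: (agree j.+1).2].
elim: m => [|m [aF aG]]; first by [].
have [eF eG] : F m = F' m /\ G m = G' m.
  case: m aF aG => [|m] aF aG; last exact: solution_step sol sol' aF aG.
  by case: sol => -> -> _ _; case: sol' => -> -> _ _.
by split=> j; rewrite ltnS leq_eqVlt => /predU1P[-> // | ]; [exact: aF | exact: aG].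
Qed.

End Recurrence.

Definition tcoef (p : nat) (a : ser) : nat -> K := fun m => a p (p%:Z - m%:Z).

Definition order_ge (p : nat) (a : ser) := forall n i, (n < p)%N -> a n i = 0.

Lemma order_ge0 a : order_ge 0 a.
Proof. by []. Qed.

Lemma order_ge_smul p r a b : order_ge p a -> order_ge r b -> order_ge (p + r) (smul a b).
Proof.
move=> ha hb n i hn; rewrite /smul; case: ifP => // _.
apply: big1 => k _; apply: big1 => j _; have := ltn_ord k => hk.
case: (ltnP k p) => hkp; first by rewrite ha ?mul0r.
by rewrite hb ?mulr0 //; lia.
Qed.

Lemma order_ge_ssub p a b : order_ge p a -> order_ge p b -> order_ge p (ssub a b).
Proof. by move=> ha hb n i hn; rewrite /ssub ha ?hb ?subr0. Qed.

Lemma order_ge_tmon p k c : (p <= k)%N -> order_ge p (tmon k c).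
Proof. by move=> hk n i hn; rewrite /tmon; case: eqP => //= hnk; lia. Qed.

Lemma order_ge_shift p a : order_ge p a -> order_ge p (shift a).
Proof. by move=> ha n i hn; rewrite /shift ha ?mulr0. Qed.

Lemma tcoef_smul p r a b : order_ge p a -> order_ge r b ->
  tcoef (p + r) (smul a b) = conv (tcoef p a) (tcoef r b).
Proof.
move=> ha hb; apply: functional_extensionality => m.
rewrite /tcoef /smul /conv big_mkord.
have -> : (Posz (p + r) - Posz m <= Posz (p + r))%R = true by apply/idP; lia.
have -> : absz (Posz (p + r) - (Posz (p + r) - Posz m))%R = m by rewrite opprB addrCA subrr addr0.
have hp : (p < (p + r).+1)%N by lia.
rewrite (bigD1 (Ordinal hp)) //= [X in _ + X]big1 ?addr0 => [|i hi].
  by apply: eq_bigr => j _; rewrite addKn; congr (_ * b r _); have := ltn_ord j; lia.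
apply: big1 => j _; have hip : (i : nat) != p by apply: contraNneq hi => e; apply/eqP/val_inj.
case: (ltnP i p) => hi'; first by rewrite ha ?mul0r.
by rewrite hb ?mulr0 //; have := ltn_ord i; lia.
Qed.

Lemma tcoef_tmon k c : tcoef k (tmon k c) = mono k c.
Proof.
apply: functional_extensionality => m.
by rewrite /tcoef /tmon /mono eqxx /= subr_eq0 eqz_nat eq_sym.
Qed.

Lemma tcoef_ssub p a b : tcoef p (ssub a b) = tcoef p a \- tcoef p b.
Proof. by []. Qed.

Lemma tcoef_below p n a : order_ge p a -> (n < p)%N -> tcoef n a = \0.
Proof. by move=> ha hn; apply: functional_extensionality => m; rewrite /tcoef ha. Qed.

Definition tlead (p : nat) (a : ser) (U : nat -> K) := order_ge p a /\ tcoef p a = U.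

Lemma tlead_tcoef p a : order_ge p a -> tlead p a (tcoef p a).
Proof. by []. Qed.

Lemma tlead_one : tlead 0 (tmon 0 1) (mono 0 1).
Proof. by split; [exact: order_ge0 | exact: tcoef_tmon]. Qed.

Lemma tlead_below p n a : order_ge p a -> (n < p)%N -> tlead n a \0.
Proof. by move=> ha hn; split; [move=> k i hk; apply: ha; lia | exact: tcoef_below ha hn]. Qed.

Lemma tlead_smul p r a b U V : tlead p a U -> tlead r b V -> tlead (p + r) (smul a b) (conv U V).
Proof. by case=> ha <- [hb <-]; split; [exact: order_ge_smul | exact: tcoef_smul]. Qed.

Lemma tlead_sub_tmon p a U c : tlead p a U -> tlead p (ssub a (tmon p c)) (U \- mono p c).
Proof.
by case=> ha <-; split; [apply: order_ge_ssub ha (order_ge_tmon _ _) | rewrite tcoef_ssub tcoef_tmon].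
Qed.

Lemma b1_neq0 : b1 != 0.
Proof. by rewrite /b1 /tofracK tofrac_eq0 /X1 /u9 /u8 /u7 /u6 /u5 /u4 /u3 /u2 !polyC_eq0 polyX_eq0. Qed.
Lemma b2_neq0 : b2 != 0.
Proof. by rewrite /b2 /tofracK tofrac_eq0 /X2 /u9 /u8 /u7 /u6 /u5 /u4 /u3 !polyC_eq0 polyX_eq0. Qed.
Lemma b3_neq0 : b3 != 0.
Proof. by rewrite /b3 /tofracK tofrac_eq0 /X3 /u9 /u8 /u7 /u6 /u5 /u4 !polyC_eq0 polyX_eq0. Qed.
Lemma b4_neq0 : b4 != 0.
Proof. by rewrite /b4 /tofracK tofrac_eq0 /X4 /u9 /u8 /u7 /u6 /u5 !polyC_eq0 polyX_eq0. Qed.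
Lemma b5_neq0 : b5 != 0.
Proof. by rewrite /b5 /tofracK tofrac_eq0 /X5 /u9 /u8 /u7 /u6 !polyC_eq0 polyX_eq0. Qed.
Lemma b6_neq0 : b6 != 0.
Proof. by rewrite /b6 /tofracK tofrac_eq0 /X6 /u9 /u8 /u7 !polyC_eq0 polyX_eq0. Qed.
Lemma b7_neq0 : b7 != 0.
Proof. by rewrite /b7 /tofracK tofrac_eq0 /X7 /u9 /u8 !polyC_eq0 polyX_eq0. Qed.
Lemma b8_neq0 : b8 != 0.
Proof. by rewrite /b8 /tofracK tofrac_eq0 /X8 /u9 !polyC_eq0 polyX_eq0. Qed.
Lemma Lam_neq0 : Lam != 0.
Proof. by rewrite /Lam /tofracK tofrac_eq0 /X9 polyX_eq0. Qed.

Lemma BB_neq0 : BB != 0.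
Proof. exact: mulf_neq0 (mulf_neq0 (mulf_neq0 b1_neq0 b2_neq0) b3_neq0) b4_neq0. Qed.

Lemma lam_neq0 : lam != 0.
Proof. exact: mulf_neq0 (expf_neq0 _ Lam_neq0) (invr_neq0 BB_neq0). Qed.

(* Both facts below compare coefficients of the last indeterminate [Lam]:
   [BB] is a constant polynomial in it. *)
Lemma BB_Lam2_neq0 : BB - Lam ^+ 2 != 0.
Proof.
rewrite /BB /b1 /b2 /b3 /b4 /Lam /tofracK -!tofracM -tofracXn -tofracB tofrac_eq0.
apply/eqP => /(congr1 (fun p : P9 => p`_2)).
rewrite coefB coef0 /X1 /X2 /X3 /X4 /X9 /u9 -!polyCM coefC /= coefXn eqxx sub0r.
by move/eqP; rewrite oppr_eq0 oner_eq0.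
Qed.

Lemma lam_expn_neq1 m : (0 < m)%N -> lam ^+ m != 1.
Proof.
move=> m_gt0; apply/eqP; rewrite /lam exprMn exprVn -exprM => /divr1_eq.
rewrite /BB /b1 /b2 /b3 /b4 /Lam /tofracK -!tofracM -!tofracXn => /eqP.
rewrite tofrac_eq => /eqP /(congr1 (fun p : P9 => p`_(2 * m))).
rewrite /X9 coefXn eqxx /X1 /X2 /X3 /X4 /u9 -!polyCM -polyC_exp coefC.
have -> : (2 * m == 0)%N = false by apply/negbTE; lia.
by move/eqP; rewrite oner_eq0.
Qed.




Lemma tlead_shift1 a U : tlead 1 a U -> tlead 1 (shift a) (qq \*o twist b1 b2 b3 b4 Lam U).
Proof.
case=> ha <-; split; first exact: order_ge_shift.
apply: functional_extensionality => m.
rewrite /tcoef /shift /GRing.mull_fun /twist /GRing.mul_fun expr1 expfzDr ?lam_neq0 //.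
by rewrite expr1z -exprnN -exprVn !mulrA.
Qed.

Lemma qPA1_eq1_defect1 f g : order_ge 1 f -> order_ge 1 g -> qPA1_eq1 f g ->
  forall m, defect1 b1 b2 b3 b4 Lam (tcoef 1 f) (tcoef 1 g) m = 0.
Proof.
move=> f_ge1 g_ge1 eq1.
apply: (defect1_eq0 b1_neq0 b2_neq0 b3_neq0 b4_neq0 b5_neq0 b6_neq0 b7_neq0 b8_neq0).
have tF := tlead_tcoef f_ge1; have tG := tlead_tcoef g_ge1; have tFb := tlead_shift1 tF.
have g_lead0 c := tlead_sub_tmon c (tlead_below g_ge1 (ltnSn 0)).
have gf_lead0 := tlead_sub_tmon 1 (tlead_below (tlead_smul tG tF).1 (ltn0Sn 1)).
have gfb_lead0 := tlead_sub_tmon 1 (tlead_below (tlead_smul tG tFb).1 (ltn0Sn 1)).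
have [_ lhs] := tlead_smul (tlead_sub_tmon 1 (tlead_smul tG tF))
  (tlead_smul (tlead_sub_tmon qq (tlead_smul tG tFb)) (tlead_smul (g_lead0 b5)
  (tlead_smul (g_lead0 b6) (tlead_smul (g_lead0 b7) (tlead_smul (g_lead0 b8) tlead_one))))).
have [_ rhs] := tlead_smul gf_lead0 (tlead_smul gfb_lead0 (tlead_smul (tlead_sub_tmon b1 tG)
  (tlead_smul (tlead_sub_tmon b2 tG) (tlead_smul (tlead_sub_tmon b3 tG)
  (tlead_smul (tlead_sub_tmon b4 tG) tlead_one))))).
exact: etrans (esym lhs) (etrans (congr1 (tcoef 4) eq1) rhs).
Qed.

Lemma qPA1_eq2_defect2 f g : order_ge 1 f -> order_ge 1 g -> qPA1_eq2 f g ->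
  forall m, defect2 b1 b2 b3 b4 Lam (tcoef 1 f) (tcoef 1 g) m = 0.
Proof.
move=> f_ge1 g_ge1 eq2.
apply: (defect2_eq0 b1_neq0 b2_neq0 b3_neq0 b4_neq0 b5_neq0 b6_neq0 b7_neq0 b8_neq0).
have tF := tlead_tcoef f_ge1; have tG := tlead_tcoef g_ge1.
have tFb := tlead_shift1 tF; have tGb := tlead_shift1 tG.
have fb_lead0 c := tlead_sub_tmon c (tlead_below tFb.1 (ltnSn 0)).
have gfb_lead0 := tlead_sub_tmon 1 (tlead_below (tlead_smul tG tFb).1 (ltn0Sn 1)).
have gbfb_lead0 := tlead_sub_tmon 1 (tlead_below (tlead_smul tGb tFb).1 (ltn0Sn 1)).
have [_ lhs] := tlead_smul (tlead_sub_tmon qq (tlead_smul tG tFb))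
  (tlead_smul (tlead_sub_tmon (qq ^+ 2) (tlead_smul tGb tFb)) (tlead_smul (fb_lead0 b5^-1)
  (tlead_smul (fb_lead0 b6^-1) (tlead_smul (fb_lead0 b7^-1) (tlead_smul (fb_lead0 b8^-1) tlead_one))))).
have [_ rhs] := tlead_smul gfb_lead0 (tlead_smul gbfb_lead0
  (tlead_smul (tlead_sub_tmon (b1^-1 * qq) tFb) (tlead_smul (tlead_sub_tmon (b2^-1 * qq) tFb)
  (tlead_smul (tlead_sub_tmon (b3^-1 * qq) tFb) (tlead_smul (tlead_sub_tmon (b4^-1 * qq) tFb) tlead_one))))).
exact: etrans (esym lhs) (etrans (congr1 (tcoef 4) eq2) rhs).
Qed.

Lemma supported_order_ge1 a : supported a -> order_ge 1 a.
Proof. by move=> sa n i; rewrite ltnS leqn0 => /eqP->; apply: sa. Qed.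

Lemma formal_solution_tcoef1 f g : formal_solution f g -> f 1%N 1 = 1 -> g 1%N 1 = Lam ->
  solution b1 b2 b3 b4 Lam (tcoef 1 f) (tcoef 1 g).
Proof.
case=> /supported_order_ge1 f_ge1 [/supported_order_ge1 g_ge1 [eq1 eq2]] f11 g11.
by split; [exact: f11 | exact: g11 | exact: qPA1_eq1_defect1 | exact: qPA1_eq2_defect2].
Qed.

Lemma tcoef1_quad a x0 x1 x2 : tcoef 1 a =1 quad x0 x1 x2 ->
  [/\ a 1%N 0 = x1, a 1%N (-1) = x2 & forall i : int, i <= -2 -> a 1%N i = 0].
Proof.
move=> e; split; [exact: e 1%N | exact: e 2%N | move=> i i_le].
have m_gt2 : (2 < absz (1 - i))%N by lia.
have -> : i = 1 - (absz (1 - i))%:Z by lia.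
by rewrite [LHS](e (absz (1 - i))); case: (absz (1 - i)) m_gt2 => [|[|[|m]]].
Qed.

Theorem mainTheorem5 (f g : ser) :
  formal_solution f g -> f 1%N 1 = 1 -> g 1%N 1 = Lam ->
  (f 1%N 0 = Feq /\ f 1%N (-1) = mu /\ (forall i : int, i <= -2 -> f 1%N i = 0)) /\
  (g 1%N 0 = Geq /\ g 1%N (-1) = BB / Lam * mu /\ (forall i : int, i <= -2 -> g 1%N i = 0)).
Proof.
move=> sol f11 g11.
have [eF eG] := solution_unique b1_neq0 b2_neq0 b3_neq0 b4_neq0 Lam_neq0 lam_expn_neq1
  (formal_solution_tcoef1 sol f11 g11)
  (solution_sol b1_neq0 b2_neq0 b3_neq0 b4_neq0 Lam_neq0 BB_Lam2_neq0).
have [F1 F2 F3] := tcoef1_quad eF; have [G1 G2 G3] := tcoef1_quad eG.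
by split; split.
Qed.
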